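(* Let $N,M,D\ge 1$ and let $T:\mathbb{R}^{M}\times\cdots\times\mathbb{R}^{M}\to\mathbb{R}^D$ ($N$ factors) be a real $N$-linear map, written $T(a^{(1)},\dots,a^{(N)})_i=\sum_{s\in\{1,\dots,M\}^N}T_{i,s}\prod_{k=1}^N a^{(k)}_{s_k}$, which is a contraction with respect to the Euclidean norm, i.e. $\|T(a^{(1)},\dots,a^{(N)})\|\le\prod_{k=1}^N\|a^{(k)}\|$ for all $a^{(1)},\dots,a^{(N)}\in\mathbb{R}^M$. Then every local hidden variable (LHV) model satisfies $$\Big\|\big\langle T(A^{(1)},\dots,A^{(N)})\big\rangle\Big\|^2\le\Big\langle\prod_{k=1}^N\|A^{(k)}\|^2\Big\rangle,$$ i.e. $\sum_{i=1}^D\Big(\sum_{s}T_{i,s}\big\langle\prod_{k}A^{(k)}_{s_k}\big\rangle\Big)^2\le\sum_{s}\big\langle\prod_k (A^{(k)}_{s_k})^2\big\rangle$, whenever the right-hand side is finite.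
   Context: Setting: $N$ parties, each with $M$ observables. An LHV model is a probability space $(\Lambda,\mu)$ together with real-valued measurable functions $A^{(k)}_j:\Lambda\to\mathbb{R}$ ($k=1,\dots,N$ the site, $j=1,\dots,M$ the observable), $A^{(k)}_j(\lambda)$ being the value assigned to the $j$-th observable at site $k$; $A^{(k)}=(A^{(k)}_1,\dots,A^{(k)}_M)\in\mathbb{R}^M$, and $\langle\cdot\rangle$ denotes expectation with respect to $\mu$. $\|\cdot\|$ is the Euclidean norm. *)

From HB Require Import structures.
From mathcomp Require Import all_boot all_order all_algebra.
From mathcomp Require Import all_classical all_reals all_analysis.
Set Implicit Arguments. Unset Strict Implicit. Unset Printing Implicit Defensive.
Import Order.TTheory GRing.Theory Num.Theory.
Local Open Scope ring_scope.

Definition enorm (R : realType) (M : nat) (v : 'I_M -> R) : R :=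
  Num.sqrt (\sum_(j < M) v j ^+ 2).

Definition multilin (R : realType) (N M D : nat)
  (Tc : 'I_D -> {ffun 'I_N -> 'I_M} -> R) (a : 'I_N -> 'I_M -> R) (i : 'I_D) : R :=
  \sum_(s : {ffun 'I_N -> 'I_M}) Tc i s * \prod_(k < N) a k (s k).

(* Pointwise, the contraction property bounds the squared norm of
   T(A(x)) by the product of the squared norms of the A^(k)(x); in particular
   every component T_i(A) is square integrable.  For each component the
   variance is nonnegative, i.e. <T_i(A)>^2 <= <T_i(A)^2>; summing over i and
   integrating the pointwise bound gives the inequality. *)

From HB Require Import structures.
From mathcomp Require Import all_boot all_order all_algebra.
From mathcomp Require Import all_classical all_reals all_analysis.
From mathcomp Require Import measurable_realfun.
Set Implicit Arguments. Unset Strict Implicit. Unset Printing Implicit Defensive.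
Import Order.TTheory GRing.Theory Num.Theory.
Local Open Scope ring_scope.

Lemma enorm_ge0 (R : realType) (M : nat) (v : 'I_M -> R) : 0 <= enorm v.
Proof. exact: sqrtr_ge0. Qed.

Lemma sqr_enorm (R : realType) (M : nat) (v : 'I_M -> R) :
  enorm v ^+ 2 = \sum_(j < M) v j ^+ 2.
Proof. by rewrite sqr_sqrtr // sumr_ge0 // => j _; exact: sqr_ge0. Qed.

Lemma ler_sqr_enorm (R : realType) (M : nat) (v : 'I_M -> R) (j : 'I_M) :
  v j ^+ 2 <= enorm v ^+ 2.
Proof.
rewrite sqr_enorm (bigD1 j) //= lerDl.
by apply: sumr_ge0 => l _; exact: sqr_ge0.
Qed.

Lemma sqr_enorm_multilin_le (R : realType) (N M D : nat)
  (Tc : 'I_D -> {ffun 'I_N -> 'I_M} -> R)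
  (hT : forall a : 'I_N -> 'I_M -> R,
      enorm (multilin Tc a) <= \prod_(k < N) enorm (a k))
  (a : 'I_N -> 'I_M -> R) :
  enorm (multilin Tc a) ^+ 2 <= \prod_(k < N) enorm (a k) ^+ 2.
Proof.
rewrite prodrXl lerXn2r ?nnegrE ?enorm_ge0 ?prodr_ge0 // => k _.
exact: enorm_ge0.
Qed.

Lemma measurable_multilin (R : realType) (N M D : nat)
  (Tc : 'I_D -> {ffun 'I_N -> 'I_M} -> R) d (T : measurableType d)
  (A : 'I_N -> 'I_M -> T -> R) (i : 'I_D) :
  (forall k j, measurable_fun setT (A k j)) ->
  measurable_fun setT (fun x => multilin Tc (fun k j => A k j x) i).
Proof.
move=> mA; apply: measurable_sum => s; apply: measurable_funM => //.
by apply: measurable_prod => k _; exact: mA.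
Qed.

Lemma measurable_sqr_enorm (R : realType) (M : nat) d (T : measurableType d)
  (v : 'I_M -> T -> R) :
  (forall j, measurable_fun setT (v j)) ->
  measurable_fun setT (fun x => enorm (fun j => v j x) ^+ 2).
Proof.
move=> mv; rewrite (_ : (fun x => _) = fun x => \sum_(j < M) v j x ^+ 2).
  by apply: measurable_sum => j; exact: measurable_funX.
by apply/funext => x; rewrite sqr_enorm.
Qed.

Local Open Scope ereal_scope.

Lemma Lfun2_of_integrable_sqr (R : realType) d (T : measurableType d)
  (mu : {measure set T -> \bar R}) (f : T -> R) :
  measurable_fun setT f -> mu.-integrable setT (EFin \o (fun x => f x ^+ 2)%R) ->
  f \in Lfun mu 2%:E.
Proof.
move=> mf /integrableP[_ f2fin]; rewrite inE; apply/andP; split; rewrite inE //=.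
rewrite /finite_norm unlock poweR_lty //.
rewrite (eq_integral (fun x => `|(EFin \o (fun x => f x ^+ 2)%R) x|)) // => x _.
by rewrite /= powR_mulrn // real_normK ?num_real // ger0_norm ?sqr_ge0.
Qed.

Lemma sqr_expectation_le (R : realType) d (T : measurableType d)
  (P : probability T R) (f : T -> R) : f \in Lfun P 2%:E -> 'E_P[f] ^+ 2 <= 'E_P[f ^+ 2].
Proof.
move=> f2; have := variance_ge0 P f; rewrite varianceE // subre_ge0 //.
by rewrite expectation_fin_num // expr2; exact: Lfun2_mul_Lfun1.
Qed.

Lemma sqr_enorm_expectation_le (R : realType) (D : nat) d (T : measurableType d)
  (P : probability T R) (Y : 'I_D -> T -> R) :
  (forall i, Y i \in Lfun P 2%:E) ->
  ((enorm (fun i => fine (\int[P]_x (Y i x)%:E))) ^+ 2)%:E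
  <= \int[P]_x ((enorm (fun i => Y i x)) ^+ 2)%:E.
Proof.
move=> Y2; rewrite sqr_enorm -sumEFin.
under eq_integral => x _ do rewrite sqr_enorm -sumEFin.
rewrite ge0_integral_sum //; last first.
- by move=> i x _; rewrite lee_fin sqr_ge0.
- move=> i; apply/measurable_EFinP; apply: measurable_funX.
  by have /andP[] := Y2 i; rewrite inE.
apply: lee_sum => i _.
have Y1 := Lfun_subset12 (fin_num_measure P _ measurableT) (Y2 i).
have := sqr_expectation_le (Y2 i); have := expectation_fin_num Y1.
by rewrite unlock => /fineK Efin; rewrite EFin_expe Efin.
Qed.

Theorem proposition1 (R : realType) (N M D : nat)
  (hN : (0 < N)%N) (hM : (0 < M)%N) (hD : (0 < D)%N)
  (Tc : 'I_D -> {ffun 'I_N -> 'I_M} -> R)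
  (hT : forall a : 'I_N -> 'I_M -> R,
      (enorm (multilin Tc a) <= \prod_(k < N) enorm (a k))%R)
  (d : measure_display) (Omega : measurableType d) (P : probability Omega R)
  (A : 'I_N -> 'I_M -> Omega -> R)
  (hA : forall k j, measurable_fun setT (A k j))
  (hfin : \int[P]_x (\prod_(k < N) enorm (fun j => A k j x) ^+ 2)%:E < +oo) :
  ((enorm (fun i => fine (\int[P]_x (multilin Tc (fun k j => A k j x) i)%:E)))
     ^+ 2)%:E
  <= \int[P]_x (\prod_(k < N) enorm (fun j => A k j x) ^+ 2)%:E.
Proof.
set Y := fun i x => multilin Tc (fun k j => A k j x) i.
set X2 := fun x => (\prod_(k < N) enorm (fun j => A k j x) ^+ 2)%R.
have X2_ge0 x : (0 <= X2 x)%R by apply: prodr_ge0 => k _; exact: sqr_ge0.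
have YX2 x : (enorm (fun i => Y i x) ^+ 2 <= X2 x)%R := sqr_enorm_multilin_le hT _.
have mX2 : measurable_fun setT X2.
  by apply: measurable_prod => k _; exact: measurable_sqr_enorm.
have iX2 : P.-integrable setT (EFin \o X2).
  apply/integrableP; split; first exact/measurable_EFinP.
  rewrite (eq_integral (fun x => (X2 x)%:E)) // => x _.
  by apply: gee0_abs; rewrite lee_fin.
have Y2 i : Y i \in Lfun P 2%:E.
  apply: Lfun2_of_integrable_sqr; first exact: measurable_multilin.
  apply: (le_integrable measurableT _ _ iX2).
    by apply/measurable_EFinP/measurable_funX; exact: measurable_multilin.
  move=> x _; rewrite /= !ger0_norm ?lee_fin ?sqr_ge0 //.
  exact: le_trans (ler_sqr_enorm (fun i => Y i x) i) (YX2 x).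
apply: le_trans (sqr_enorm_expectation_le Y2) _.
apply: ge0_le_integral => //.
- by move=> x _; rewrite lee_fin sqr_ge0.
- apply/measurable_EFinP; apply: measurable_sqr_enorm => i.
  exact: measurable_multilin.
- exact/measurable_EFinP.
- by move=> x _; rewrite lee_fin; exact: YX2.
Qed.
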